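(* For every $t=0,1,\dots,T-1$: (a) the functions $H_t$ and $V_t$ are sub-$K_t$-convex; (b) $H_t(S_t)\le \inf_{z_j\in Z_\theta} H_t(z_j)$.
   Context: Model. Fix an integer horizon $T\ge 2$, a discount factor $\alpha\in(0,1]$, and for $t=0,\dots,T-1$: unit ordering costs $c_t\in\mathbb R$, a salvage coefficient $c_T\in\mathbb R$, setup costs $K_t\ge 0$, functions $G_t:\mathbb R\to\mathbb R$ (expected one-period holding/penalty cost), and independent nonnegative random demands $D_0,\dots,D_{T-1}$ with right-continuous distribution functions $F_t$ and finite means; all expectations appearing are assumed finite. Put $C_t(y)=(c_t-\alpha c_{t+1})y+G_t(y)+\alpha c_{t+1}E[D_t]$. Standing assumptions: (i) each $C_t$ is convex with $C_t(y)\to+\infty$ as $|y|\to\infty$; (ii) $K_t\ge \alpha K_{t+1}$ for $t=0,\dots,T-2$. Grid construction. Fix $\theta>0$, let $z_m=m\theta$ ($m\in\mathbb Z$), $Z_\theta=\{z_m:m\in\mathbb Z\}$, and $f_t(n)=F_t(z_{n+1})-F_t(z_n)$ for integers $n\ge -1$. Let $C^m_t=\min\{y: C_t(y)=\min_{x\in\mathbb R}C_t(x)\}$; with $n_0$ the integer such that $z_{n_0}<C^m_t\le z_{n_0+1}$, let $S^U_t=\min\{z_m\in Z_\theta: z_m\ge C^m_t,\ C_t(z_m)>C_t(z_{n_0})+K_t\}$. Let $s_{T-1}$ be a point with $s_{T-1}\le C^m_{T-1}$ and $C_{T-1}(s_{T-1})=C_{T-1}(C^m_{T-1})+K_{T-1}$,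 and set $\bar I_{T-1}=s_{T-1}$. For $t=T-2,\dots,0$ (backwards) set $I_t=\max\{z_m\in Z_\theta: z_m<\min(\bar I_{t+1}-\theta,\,C^m_t)\}$ and $\bar I_t=\max\{z_m\in Z_\theta: z_m\le I_t,\ C_t(z_m)>C_t(I_t)+K_t\}+\theta$. Set $H_{T-1}=C_{T-1}$, $S_{T-1}=C^m_{T-1}$. Whenever $H_t,S_t,s_t$ are defined, let $V_t(y)=H_t(S_t)+K_t$ for $y<s_t$ and $V_t(y)=H_t(y)$ for $y\ge s_t$. For $t=T-2,\dots,0$ (backwards): $H_t(y)=C_t(y)+\alpha\sum_{n=-1}^{\infty}V_{t+1}(y-z_n)f_t(n)$; $S_t=\max\{z_m\in Z_\theta: I_t\le z_m\le S^U_t,\ H_t(z_m)=\min\{H_t(z_n): z_n\in Z_\theta,\ I_t\le z_n\le S^U_t\}\}$; $s_t=S_t$ if $K_t=0$, and if $K_t>0$, $s_t=\min\{z_m\in Z_\theta:\bar I_t\le z_m\le S_t,\ H_t(z_m)\le H_t(S_t)+K_t\}$. Sub-$K$-convexity. For $K\ge 0$, a function $g:\mathbb R\to\mathbb R$ is sub-$K$-convex if for all $x\le y\le z_m$ with $x,y\in\mathbb R$, $z_m\in Z_\theta$, and $y=\tau x+(1-\tau)z_m$, $\tau\in[0,1]$, one has $g(y)\le \tau g(x)+(1-\tau)(g(z_m)+K)$. *)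

From Stdlib Require Import Reals ZArith.
From Coquelicot Require Import Coquelicot.
Open Scope R_scope.

Definition zgrid (theta : R) (m : Z) : R := IZR m * theta.
Definition on_grid (theta : R) (x : R) : Prop := exists m : Z, x = zgrid theta m.

Definition is_grid_min (theta : R) (P : R -> Prop) (x : R) : Prop :=
  on_grid theta x /\ P x /\ (forall m : Z, P (zgrid theta m) -> x <= zgrid theta m).
Definition is_grid_max (theta : R) (P : R -> Prop) (x : R) : Prop :=
  on_grid theta x /\ P x /\ (forall m : Z, P (zgrid theta m) -> zgrid theta m <= x).

Definition convex_fun (g : R -> R) : Prop :=
  forall x y l, 0 <= l <= 1 -> g (l * x + (1 - l) * y) <= l * g x + (1 - l) * g y.
Definition coercive (g : R -> R) : Prop :=
  is_lim g p_infty p_infty /\ is_lim g m_infty p_infty.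

Definition is_cdf_nonneg (F : R -> R) : Prop :=
  (forall x y, x <= y -> F x <= F y) /\
  (forall x, filterlim F (at_right x) (locally (F x))) /\
  (forall x, x < 0 -> F x = 0) /\
  is_lim F p_infty 1.

Definition is_mean_of_cdf (F : R -> R) (mu : R) : Prop :=
  is_RInt_gen (fun x => 1 - F x) (at_point 0) (Rbar_locally p_infty) mu.

Definition Cfun (alpha : R) (c : nat -> R) (G : nat -> R -> R) (ED : nat -> R)
  (t : nat) (y : R) : R :=
  (c t - alpha * c (t + 1)%nat) * y + G t y + alpha * c (t + 1)%nat * ED t.

Definition is_least_minimizer (g : R -> R) (x : R) : Prop :=
  (forall y, g x <= g y) /\ (forall y, (forall w, g y <= g w) -> x <= y).

Definition fprob (theta : R) (F : R -> R) (n : Z) : R :=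
  F (zgrid theta (n + 1)) - F (zgrid theta n).

Definition Vfun (H : R -> R) (S s K : R) (y : R) : R :=
  if Rlt_dec y s then H S + K else H y.

(** H_t(y) = C_t(y) + alpha * sum_{n >= -1} V_{t+1}(y - z_n) f_t(n)
    (the index n = k - 1 with k ranging over nat). *)
Definition Hstep (theta alpha : R) (Ct : R -> R) (Ft : R -> R)
  (Vnext : R -> R) (y : R) : R :=
  Ct y + alpha * Series (fun k : nat =>
     Vnext (y - zgrid theta (Z.of_nat k - 1)) * fprob theta Ft (Z.of_nat k - 1)).

Definition sub_K_convex (theta K : R) (g : R -> R) : Prop :=
  forall x y zm tau : R, on_grid theta zm -> x <= y <= zm -> 0 <= tau <= 1 ->
    y = tau * x + (1 - tau) * zm ->
    g y <= tau * g x + (1 - tau) * (g zm + K).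

(* The proof is a backward induction on t carrying the invariant
   [period_invariant]: H_t is sub-K_t-convex, S_t minimises H_t over the
   grid Z_theta, H_t(s_t) <= H_t(S_t) + K_t and Ibar_t <= s_t.  From it,
   V_t is sub-K_t-convex ([Vfun_sub_K_convex]), which is the remaining part
   of the theorem.

   Ordering up to S below s preserves both
   properties.  The inductive step [period_step] then obtains
   sub-K-convexity of H_t = C_t + alpha E[V_{t+1}] from alpha K_{t+1} <= K_t,
   and global grid minimality of S_t from its minimality on the window
   [I_t, S^U_t]: H_t is nonincreasing left of I_t, where E[V_{t+1}] is
   constant, and exceeds H_t(z_{n_0}) right of S^U_t. *)

From Stdlib Require Import Reals ZArith Lra Lia.
From Coquelicot Require Import Coquelicot.
Open Scope R_scope.

Lemma convex_comb_of_between (x y a : R) :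
  x <= a <= y -> x < y -> exists l, 0 <= l <= 1 /\ a = l * x + (1 - l) * y.
Proof.
  intros Ha Hxy. exists ((y - a) / (y - x)). split.
  - split.
    + apply Rdiv_le_0_compat; lra.
    + apply (Rmult_le_reg_r (y - x)); [lra|].
      unfold Rdiv; rewrite Rmult_assoc, Rinv_l; lra.
  - field; lra.
Qed.

Lemma convex_between_min (g : R -> R) (m a b : R) :
  convex_fun g -> (forall w, g m <= g w) -> b <= a <= m \/ m <= a <= b -> g a <= g b.
Proof.
  intros Hg Hm Hab.
  destruct (Req_dec b m) as [<-|Hbm]; [replace a with b by lra; lra|].
  destruct Hab as [Hab|Hab].
  - destruct (convex_comb_of_between b m a Hab ltac:(lra)) as (l & Hl & ->).
    specialize (Hg b m l Hl). specialize (Hm b). nra.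
  - destruct (convex_comb_of_between m b a Hab ltac:(lra)) as (l & Hl & ->).
    specialize (Hg m b l Hl). specialize (Hm b). nra.
Qed.

Lemma is_series_le_lim (a b : nat -> R) (la lb : R) :
  is_series a la -> is_series b lb -> (forall n, a n <= b n) -> la <= lb.
Proof.
  intros Ha Hb Hab.
  exact (is_lim_seq_le (sum_n a) (sum_n b) la lb (fun n => sum_n_m_le a b 0 n Hab) Ha Hb).
Qed.

Lemma weighted_comb_le (w a b c : nat -> R) (tau K : R) :
  (forall k, 0 <= w k) -> is_series w 1 ->
  ex_series (fun k => a k * w k) -> ex_series (fun k => b k * w k) ->
  ex_series (fun k => c k * w k) ->
  (forall k, a k <= tau * b k + (1 - tau) * (c k + K)) ->
  Series (fun k => a k * w k)
    <= tau * Series (fun k => b k * w k) + (1 - tau) * (Series (fun k => c k * w k) + K).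
Proof.
  intros Hw Hw1 Ea Eb Ec Habc.
  assert (Hcomb : is_series
    (fun k => tau * (b k * w k) + (1 - tau) * (c k * w k + K * w k))
    (tau * Series (fun k => b k * w k) + (1 - tau) * (Series (fun k => c k * w k) + K * 1))).
  { apply (is_series_plus (fun k => tau * (b k * w k))
                          (fun k => (1 - tau) * (c k * w k + K * w k))).
    - exact (is_series_scal_l tau _ _ (Series_correct _ Eb)).
    - apply (is_series_scal_l (1 - tau) (fun k => c k * w k + K * w k)).
      exact (is_series_plus _ _ _ _ (Series_correct _ Ec) (is_series_scal_l K _ _ Hw1)). }
  rewrite <- (Rmult_1_r K).
  apply (is_series_le_lim _ _ _ _ (Series_correct _ Ea) Hcomb).
  intro k. specialize (Habc k). specialize (Hw k). nra.
Qed.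

Lemma zgrid_succ (theta : R) (n : Z) : zgrid theta (n + 1) = zgrid theta n + theta.
Proof. unfold zgrid; rewrite plus_IZR; simpl; ring. Qed.

Lemma zgrid_of_nat_pred (theta : R) (k : nat) : zgrid theta (Z.of_nat k - 1) = (INR k - 1) * theta.
Proof. unfold zgrid; rewrite minus_IZR, <- INR_IZR_INZ; reflexivity. Qed.

Lemma on_grid_shift (theta x : R) (n : Z) : on_grid theta x -> on_grid theta (x - zgrid theta n).
Proof. intros [m ->]. exists (m - n)%Z. unfold zgrid. rewrite minus_IZR. ring. Qed.

Lemma on_grid_gap (theta x y : R) :
  0 < theta -> on_grid theta x -> on_grid theta y -> x < y -> x + theta <= y.
Proof.
  intros Ht [a ->] [b ->] Hab. unfold zgrid in *.
  assert (Hlt : (a < b)%Z) by (apply lt_IZR, (Rmult_lt_reg_r theta); auto).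
  assert (Hle : IZR (a + 1) <= IZR b) by (apply IZR_le; lia).
  rewrite plus_IZR in Hle. simpl in Hle. nra.
Qed.

Lemma grid_points_unbounded (theta : R) : 0 < theta -> is_lim_seq (fun k => INR k * theta) p_infty.
Proof.
  intros Ht. assert (H := is_lim_seq_scal_r INR theta p_infty is_lim_seq_INR).
  simpl in H. destruct (Rle_dec 0 theta); [|lra].
  destruct (Rle_lt_or_eq_dec 0 theta r); [exact H|lra].
Qed.

Lemma fprob_nonneg (theta : R) (F : R -> R) (n : Z) :
  is_cdf_nonneg F -> 0 < theta -> 0 <= fprob theta F n.
Proof.
  intros [Hmono _] Ht. unfold fprob. rewrite zgrid_succ.
  specialize (Hmono (zgrid theta n) (zgrid theta n + theta) ltac:(lra)). lra.
Qed.

Lemma fprob_partial_sum (theta : R) (F : R -> R) (N : nat) :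
  sum_n (fun k => fprob theta F (Z.of_nat k - 1)) N
  = F (zgrid theta (Z.of_nat N)) - F (zgrid theta (-1)).
Proof.
  induction N as [|N IH].
  - rewrite sum_O. reflexivity.
  - rewrite sum_Sn, IH. change plus with Rplus. unfold fprob.
    replace (Z.of_nat (S N) - 1 + 1)%Z with (Z.of_nat (S N)) by lia.
    replace (Z.of_nat (S N) - 1)%Z with (Z.of_nat N) by lia.
    simpl; ring.
Qed.

Lemma fprob_series (theta : R) (F : R -> R) :
  is_cdf_nonneg F -> 0 < theta -> is_series (fun k => fprob theta F (Z.of_nat k - 1)) 1.
Proof.
  intros (_ & _ & Hneg & Hlim) Ht. unfold is_series.
  apply (filterlim_ext (fun N => F (INR N * theta))).
  { intro N. rewrite fprob_partial_sum. unfold zgrid. rewrite <- INR_IZR_INZ.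
    rewrite (Hneg (IZR (-1) * theta)); [ring | simpl; lra]. }
  exact (filterlim_comp _ _ _ _ F _ _ _ (grid_points_unbounded theta Ht) Hlim).
Qed.

Definition expected_next (theta : R) (F V : R -> R) (y : R) : R :=
  Series (fun k : nat => V (y - zgrid theta (Z.of_nat k - 1)) * fprob theta F (Z.of_nat k - 1)).

Lemma Hstep_expected_next (theta alpha : R) (C F V : R -> R) (y : R) :
  Hstep theta alpha C F V y = C y + alpha * expected_next theta F V y.
Proof. reflexivity. Qed.

Definition grid_K_monotone (theta K : R) (g : R -> R) : Prop :=
  forall x z, on_grid theta z -> x <= z -> g x <= g z + K.

(* Expectations of a cost V that is constant (c0) left of s: such a V is
   bounded on the support of the demand, so all series below converge. *)
Section Expectation.
Variables (theta s c0 : R) (F V : R -> R).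
Hypotheses (htheta : 0 < theta) (hF : is_cdf_nonneg F)
  (hVconst : forall w, w < s -> V w = c0).

(* Only finitely many terms are not c0 * f(n). *)
Lemma expected_next_summable (y : R) :
  ex_series (fun k => V (y - zgrid theta (Z.of_nat k - 1)) * fprob theta F (Z.of_nat k - 1)).
Proof.
  assert (Hlim := grid_points_unbounded theta htheta). apply is_lim_seq_spec in Hlim.
  destruct (Hlim (y - s + theta)) as [N HN].
  apply (ex_series_incr_n _ N).
  apply (ex_series_ext (fun k => c0 * fprob theta F (Z.of_nat (N + k) - 1))).
  { intro k. rewrite hVconst; [reflexivity|]. rewrite zgrid_of_nat_pred.
    specialize (HN (N + k)%nat ltac:(lia)). lra. }
  apply (ex_series_scal_l c0 (fun k => fprob theta F (Z.of_nat (N + k) - 1))).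
  apply (ex_series_incr_n (fun k => fprob theta F (Z.of_nat k - 1)) N).
  exists 1. exact (fprob_series theta F hF htheta).
Qed.

(* Far to the left every shifted argument lies below s. *)
Lemma expected_next_const (y : R) : y + theta < s -> expected_next theta F V y = c0.
Proof.
  intros Hy. unfold expected_next.
  rewrite (Series_ext _ (fun k => c0 * fprob theta F (Z.of_nat k - 1))).
  - rewrite Series_scal_l, (is_series_unique _ _ (fprob_series theta F hF htheta)). ring.
  - intro k. rewrite hVconst; [reflexivity|].
    rewrite zgrid_of_nat_pred. generalize (pos_INR k). nra.
Qed.

(* The expectation over the demand preserves sub-K-convexity, since the
   grid is invariant under the demand shifts [z_n]. *)
Lemma expected_next_sub_K_convex (K : R) :
  sub_K_convex theta K V -> sub_K_convex theta K (expected_next theta F V).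
Proof.
  intros HV x y zm tau Hz Hxy Htau Hy. unfold expected_next.
  apply weighted_comb_le; try apply expected_next_summable.
  - intro k. exact (fprob_nonneg theta F _ hF htheta).
  - exact (fprob_series theta F hF htheta).
  - intro k. apply HV; auto.
    + apply on_grid_shift, Hz.
    + lra.
    + rewrite Hy. ring.
Qed.

(* Likewise for grid K-monotonicity (the case tau = 0 of [weighted_comb_le]). *)
Lemma expected_next_grid_K_monotone (K : R) :
  grid_K_monotone theta K V -> grid_K_monotone theta K (expected_next theta F V).
Proof.
  intros HV x z Hz Hxz. unfold expected_next.
  replace (Series _ + K) with
    (0 * Series (fun k => V (x - zgrid theta (Z.of_nat k - 1)) * fprob theta F (Z.of_nat k - 1))
     + (1 - 0) * (Series (fun k => V (z - zgrid theta (Z.of_nat k - 1)) * fprob theta F (Z.of_nat k - 1)) + K))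
    by ring.
  apply weighted_comb_le; try apply expected_next_summable.
  - intro k. exact (fprob_nonneg theta F _ hF htheta).
  - exact (fprob_series theta F hF htheta).
  - intro k. assert (HVk := HV (x - zgrid theta (Z.of_nat k - 1)) (z - zgrid theta (Z.of_nat k - 1))
                         (on_grid_shift theta z _ Hz) ltac:(lra)).
    lra.
Qed.
End Expectation.

Lemma Hstep_sub_K_convex (theta alpha K K' s c0 : R) (C F V : R -> R) :
  0 < theta -> 0 <= alpha -> alpha * K' <= K -> is_cdf_nonneg F -> convex_fun C ->
  (forall w, w < s -> V w = c0) -> sub_K_convex theta K' V ->
  sub_K_convex theta K (Hstep theta alpha C F V).
Proof.
  intros Ht Ha HaK HF HC Hconst HV x y zm tau Hz Hxy Htau Hy.
  rewrite !Hstep_expected_next.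
  assert (HCy := HC x zm tau Htau). rewrite <- Hy in HCy.
  assert (HEy := expected_next_sub_K_convex theta s c0 F V Ht HF Hconst K' HV x y zm tau Hz Hxy Htau Hy).
  assert (HaE := Rmult_le_compat_l alpha _ _ Ha HEy).
  assert (HKt : (1 - tau) * (alpha * K') <= (1 - tau) * K) by (apply Rmult_le_compat_l; lra).
  nra.
Qed.

Section OrderUpTo.
Variables (theta K S s : R) (H : R -> R).
Hypotheses (hK : 0 <= K) (hsub : sub_K_convex theta K H)
  (hmin : forall j, H S <= H (zgrid theta j)) (hs : H s <= H S + K).

Lemma Vfun_const_left (w : R) : w < s -> Vfun H S s K w = H S + K.
Proof. intros Hw. unfold Vfun. destruct (Rlt_dec w s); [reflexivity | lra]. Qed.

Lemma Vfun_grid_lower (z : R) : on_grid theta z -> H S <= Vfun H S s K z.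
Proof.
  intros [m ->]. unfold Vfun. destruct (Rlt_dec (zgrid theta m) s); [lra | apply hmin].
Qed.

(* Ordering up to S below s keeps sub-K-convexity: the cost of ordering is
   H(S) + K, below every value of H on the grid plus K. *)
Lemma Vfun_sub_K_convex : sub_K_convex theta K (Vfun H S s K).
Proof.
  intros x y zm tau Hz Hxy Htau Hy.
  assert (HVz := Vfun_grid_lower zm Hz).
  destruct (Rlt_dec y s) as [Hys|Hys].
  - rewrite !Vfun_const_left by lra. nra.
  - unfold Vfun at 1 2. destruct (Rlt_dec y s) as [|_]; [lra|].
    assert (Hzm : Vfun H S s K zm = H zm) by (unfold Vfun; destruct (Rlt_dec zm s); [lra | reflexivity]).
    rewrite Hzm in *.
    destruct (Rlt_dec x s) as [Hxs|Hxs]; [| exact (hsub x y zm tau Hz Hxy Htau Hy)].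
    destruct (Req_dec s zm) as [Es|Ns].
    + replace y with s by lra. rewrite Es in *. nra.
    + destruct (convex_comb_of_between s zm y ltac:(lra) ltac:(lra)) as (l & Hl & Ey).
      assert (Hsy := hsub s y zm l Hz ltac:(lra) Hl Ey).
      assert (Htl : tau <= l) by nra.
      nra.
Qed.

(* Consequently V is grid K-monotone: compare x with a point w left of s. *)
Lemma Vfun_grid_K_monotone : grid_K_monotone theta K (Vfun H S s K).
Proof.
  intros x zm Hz Hxz.
  assert (HVz := Vfun_grid_lower zm Hz).
  set (w := Rmin x s - 1).
  assert (Hwx : w < x) by (unfold w; generalize (Rmin_l x s); lra).
  assert (Hws : w < s) by (unfold w; generalize (Rmin_r x s); lra).
  destruct (convex_comb_of_between w zm x ltac:(lra) ltac:(lra)) as (tau & Htau & Ex).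
  assert (Hx := Vfun_sub_K_convex w x zm tau Hz ltac:(lra) Htau Ex).
  rewrite (Vfun_const_left w Hws) in Hx.
  nra.
Qed.
End OrderUpTo.

Section Period.
Variables (theta alpha K K' s c0 Cm : R) (C F V Ht : R -> R).
Hypotheses (htheta : 0 < theta) (halpha : 0 <= alpha) (hF : is_cdf_nonneg F)
  (hC : convex_fun C) (hCm : forall w, C Cm <= C w)
  (hVconst : forall w, w < s -> V w = c0)
  (hHt : forall y, Ht y = Hstep theta alpha C F V y).

(* Left of min(C^m, s - theta) the expected future cost is constant and C
   is nonincreasing, so H_t is nonincreasing there. *)
Lemma Ht_nonincreasing_left (a z : R) : a < Cm -> a + theta < s -> z <= a -> Ht a <= Ht z.
Proof.
  intros HaC Has Hza. rewrite !hHt, !Hstep_expected_next.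
  rewrite !(expected_next_const theta s c0 F V htheta hF hVconst) by lra.
  assert (HCa : C a <= C z) by (apply (convex_between_min C Cm); auto; lra).
  lra.
Qed.

Lemma Ht_above_right (b SU z : R) :
  alpha * K' <= K -> grid_K_monotone theta K' V ->
  Cm <= SU <= z -> b <= z -> on_grid theta z -> C b + K < C SU -> Ht b <= Ht z.
Proof.
  intros HaK HV HSU Hbz Hz HCb. rewrite !hHt, !Hstep_expected_next.
  assert (HE := expected_next_grid_K_monotone theta s c0 F V htheta hF hVconst K' HV b z Hz Hbz).
  assert (HaE := Rmult_le_compat_l alpha _ _ halpha HE).
  assert (HCz : C SU <= C z) by (apply (convex_between_min C Cm); auto; lra).
  lra.
Qed.
End Period.

Lemma window_min_is_grid_min (theta : R) (g : R -> R) (I SU S b : R) :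
  on_grid theta I -> on_grid theta b -> I <= b <= SU ->
  (forall n : Z, I <= zgrid theta n <= SU -> g S <= g (zgrid theta n)) ->
  (forall n : Z, zgrid theta n < I -> g I <= g (zgrid theta n)) ->
  (forall n : Z, SU < zgrid theta n -> g b <= g (zgrid theta n)) ->
  forall j : Z, g S <= g (zgrid theta j).
Proof.
  intros [mI ->] [mb ->] Hb Hwin Hleft Hright j.
  assert (HSI := Hwin mI ltac:(lra)). assert (HSb := Hwin mb Hb).
  destruct (Rlt_le_dec (zgrid theta j) (zgrid theta mI)) as [Hj|Hj].
  - specialize (Hleft j Hj). lra.
  - destruct (Rle_lt_dec (zgrid theta j) SU) as [Hj'|Hj'].
    + apply Hwin. lra.
    + specialize (Hright j Hj'). lra.
Qed.

Lemma reorder_point_bounds (theta K : R) (C Ht : R -> R) (I Ibar S s : R) :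
  0 < theta -> 0 <= K -> on_grid theta I -> I <= S ->
  is_grid_max theta (fun x => x <= I /\ C x > C I + K) (Ibar - theta) ->
  (K = 0 -> s = S) /\
  (0 < K -> is_grid_min theta (fun x => Ibar <= x <= S /\ Ht x <= Ht S + K) s) ->
  Ht s <= Ht S + K /\ Ibar <= s.
Proof.
  intros Htheta HK HI HIS (HIbg & [HIbI HCIb] & _) [Hs0 Hspos].
  destruct (Req_dec K 0) as [E0|E0].
  - rewrite (Hs0 E0). split; [lra|].
    assert (Hlt : Ibar - theta < I).
    { destruct (Rle_lt_or_eq_dec _ _ HIbI) as [Hlt|Heq]; [exact Hlt|].
      rewrite Heq in HCIb. lra. }
    assert (Hgap := on_grid_gap theta _ _ Htheta HIbg HI Hlt). lra.
  - destruct (Hspos ltac:(lra)) as (_ & [[HIbs _] HsS] & _). lra.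
Qed.

Definition period_invariant (theta K : R) (H : R -> R) (S s Ibar : R) : Prop :=
  sub_K_convex theta K H /\ (forall j : Z, H S <= H (zgrid theta j)) /\
  H s <= H S + K /\ Ibar <= s.

Lemma terminal_invariant (theta K : R) (C H : R -> R) (Cm S s Ibar : R) :
  0 <= K -> convex_fun C -> is_least_minimizer C Cm -> C s = C Cm + K ->
  (forall y, H y = C y) -> S = Cm -> Ibar = s ->
  period_invariant theta K H S s Ibar.
Proof.
  intros HK HC [HCm _] Hs HH -> ->.
  repeat split.
  - intros x y zm tau Hz Hxy Htau Hy. rewrite !HH.
    assert (Hc := HC x zm tau Htau). rewrite <- Hy in Hc. nra.
  - intro j. rewrite !HH. apply HCm.
  - rewrite !HH. lra.
  - lra.
Qed.

Lemma period_step (theta alpha K K' : R) (C F Hn Ht : R -> R)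
  (Sn sn Ibn Cm SU I Ibar S s : R) :
  0 < theta -> 0 <= alpha -> 0 <= K' -> alpha * K' <= K ->
  is_cdf_nonneg F -> convex_fun C -> is_least_minimizer C Cm ->
  (exists n0 : Z, zgrid theta n0 < Cm <= zgrid theta (n0 + 1) /\
     is_grid_min theta (fun x => Cm <= x /\ C x > C (zgrid theta n0) + K) SU) ->
  is_grid_max theta (fun x => x < Rmin (Ibn - theta) Cm) I ->
  is_grid_max theta (fun x => x <= I /\ C x > C I + K) (Ibar - theta) ->
  (forall y, Ht y = Hstep theta alpha C F (Vfun Hn Sn sn K') y) ->
  is_grid_max theta
    (fun x => I <= x <= SU /\
              forall n : Z, I <= zgrid theta n <= SU -> Ht x <= Ht (zgrid theta n)) S ->
  (K = 0 -> s = S) /\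
  (0 < K -> is_grid_min theta (fun x => Ibar <= x <= S /\ Ht x <= Ht S + K) s) ->
  period_invariant theta K' Hn Sn sn Ibn ->
  period_invariant theta K Ht S s Ibar.
Proof.
  intros Htheta Ha HK' HaK HF HC [HCm _] (n0 & [Hn0 Hn1] & HSUg & [HCmSU HCSU] & _)
    (HIg & HIlt & _) HIbar HHt (_ & [[HIS HSSU] HSwin] & _) Hs (Hsub' & Hmin' & Hs' & HIbn).
  set (Vn := Vfun Hn Sn sn K') in HHt.
  assert (Hconst : forall w, w < sn -> Vn w = Hn Sn + K') by exact (Vfun_const_left K' Sn sn Hn).
  assert (HI : I < Ibn - theta /\ I < Cm).
  { generalize (Rmin_l (Ibn - theta) Cm) (Rmin_r (Ibn - theta) Cm). lra. }
  assert (HIn0 : I <= zgrid theta n0).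
  { destruct (Rle_lt_dec I (zgrid theta n0)) as [Hle|Hlt]; [exact Hle|].
    assert (Hgap := on_grid_gap theta _ _ Htheta (ex_intro _ n0 eq_refl) HIg Hlt).
    rewrite <- zgrid_succ in Hgap. lra. }
  assert (HK : 0 <= K) by nra.
  assert (Hglob : forall j : Z, Ht S <= Ht (zgrid theta j)).
  { apply (window_min_is_grid_min theta Ht I SU S (zgrid theta n0)); auto.
    - exists n0; reflexivity.
    - lra.
    - intros n Hzn. apply (Ht_nonincreasing_left theta alpha sn (Hn Sn + K') Cm C F Vn Ht); auto; lra.
    - intros n Hzn.
      apply (Ht_above_right theta alpha K K' sn (Hn Sn + K') Cm C F Vn Ht
               Htheta Ha HF HC HCm Hconst HHt (zgrid theta n0) SU); auto; try lra.
      + exact (Vfun_grid_K_monotone theta K' Sn sn Hn HK' Hsub' Hmin' Hs').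
      + exists n; reflexivity. }
  destruct (reorder_point_bounds theta K C Ht I Ibar S s Htheta HK HIg HIS HIbar Hs) as [HsS HIbs].
  repeat split; auto.
  intros x y zm tau Hz Hxy Htau Hy. rewrite !HHt.
  apply (Hstep_sub_K_convex theta alpha K K' sn (Hn Sn + K')); auto.
  exact (Vfun_sub_K_convex theta K' Sn sn Hn HK' Hsub' Hmin' Hs').
Qed.
Theorem theorem3p1
  (T : nat) (alpha : R) (c K : nat -> R) (G : nat -> R -> R)
  (F : nat -> R -> R) (ED : nat -> R) (theta : R)
  (Cm SU s Ibar I S : nat -> R) (H : nat -> R -> R)
  (* model *)
  (hT : (2 <= T)%nat)
  (halpha : 0 < alpha <= 1)
  (hK0 : forall t, (t < T)%nat -> 0 <= K t)
  (hF : forall t, (t < T)%nat -> is_cdf_nonneg (F t))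
  (hED : forall t, (t < T)%nat -> is_mean_of_cdf (F t) (ED t))
  (hconv : forall t, (t < T)%nat -> convex_fun (Cfun alpha c G ED t))
  (hcoer : forall t, (t < T)%nat -> coercive (Cfun alpha c G ED t))
  (hKdec : forall t, (t + 2 <= T)%nat -> alpha * K (t + 1)%nat <= K t)
  (* grid construction *)
  (htheta : 0 < theta)
  (hCm : forall t, (t < T)%nat -> is_least_minimizer (Cfun alpha c G ED t) (Cm t))
  (hSU : forall t, (t + 2 <= T)%nat ->
     exists n0 : Z, zgrid theta n0 < Cm t <= zgrid theta (n0 + 1) /\
       is_grid_min theta
         (fun x => Cm t <= x /\
                   Cfun alpha c G ED t x > Cfun alpha c G ED t (zgrid theta n0) + K t)
         (SU t))
  (hsT : s (T - 1)%nat <= Cm (T - 1)%nat /\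
         Cfun alpha c G ED (T - 1)%nat (s (T - 1)%nat)
           = Cfun alpha c G ED (T - 1)%nat (Cm (T - 1)%nat) + K (T - 1)%nat)
  (hIbarT : Ibar (T - 1)%nat = s (T - 1)%nat)
  (hI : forall t, (t + 2 <= T)%nat ->
     is_grid_max theta (fun x => x < Rmin (Ibar (t + 1)%nat - theta) (Cm t)) (I t))
  (hIbar : forall t, (t + 2 <= T)%nat ->
     is_grid_max theta
       (fun x => x <= I t /\ Cfun alpha c G ED t x > Cfun alpha c G ED t (I t) + K t)
       (Ibar t - theta))
  (hHT : forall y, H (T - 1)%nat y = Cfun alpha c G ED (T - 1)%nat y)
  (hST : S (T - 1)%nat = Cm (T - 1)%nat)
  (hH : forall t, (t + 2 <= T)%nat -> forall y,
     H t y = Hstep theta alpha (Cfun alpha c G ED t) (F t)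
               (Vfun (H (t + 1)%nat) (S (t + 1)%nat) (s (t + 1)%nat) (K (t + 1)%nat)) y)
  (hS : forall t, (t + 2 <= T)%nat ->
     is_grid_max theta
       (fun x => I t <= x <= SU t /\
                 forall n : Z, I t <= zgrid theta n <= SU t -> H t x <= H t (zgrid theta n))
       (S t))
  (hs : forall t, (t + 2 <= T)%nat ->
     (K t = 0 -> s t = S t) /\
     (0 < K t ->
        is_grid_min theta
          (fun x => Ibar t <= x <= S t /\ H t x <= H t (S t) + K t) (s t))) :
  forall t, (t < T)%nat ->
    sub_K_convex theta (K t) (H t) /\
    sub_K_convex theta (K t) (Vfun (H t) (S t) (s t) (K t)) /\
    (forall j : Z, H t (S t) <= H t (zgrid theta j)).
Proof.
  assert (Hinv : forall d t, (t + d = T - 1)%nat ->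
            period_invariant theta (K t) (H t) (S t) (s t) (Ibar t)).
  { induction d as [|d IH]; intros t Htd.
    - replace t with (T - 1)%nat by lia.
      apply (terminal_invariant theta _ (Cfun alpha c G ED (T - 1)%nat) _ (Cm (T - 1)%nat));
        [apply hK0; lia | apply hconv; lia | apply hCm; lia | apply hsT
        | exact hHT | exact hST | exact hIbarT].
    - apply (period_step theta alpha (K t) (K (t + 1)%nat) (Cfun alpha c G ED t) (F t)
               (H (t + 1)%nat) (H t) (S (t + 1)%nat) (s (t + 1)%nat) (Ibar (t + 1)%nat)
               (Cm t) (SU t) (I t));
        [exact htheta | lra | apply hK0; lia | apply hKdec; lia | apply hF; lia
        | apply hconv; lia | apply hCm; lia | apply hSU; lia | apply hI; lia
        | apply hIbar; lia | apply hH; lia | apply hS; lia | apply hs; lia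
        | apply IH; lia]. }
  intros t Ht.
  destruct (Hinv (T - 1 - t)%nat t ltac:(lia)) as (Hsub & Hmin & Hs & _).
  assert (HK : 0 <= K t) by (apply hK0; exact Ht).
  repeat split; auto.
  apply Vfun_sub_K_convex; auto.
Qed.
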